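(* Let $G=(V,E)$ be a split graph with a split partition $(C,I)$. Let $E_S$ be the set of strong edges in an optimal solution for MaxSTC on $G$ and let $I_W$ be the vertices of $I$ that are incident to at least one edge of $E_S$. \begin{enumerate} \item If every vertex of $I_W$ misses at least three vertices of $C$ in $G$ then $E_S = E(C)$. \item If every vertex of $I_W$ misses exactly one vertex of $C$ in $G$ then $|E_S| \leq |E(C)| + \lfloor\frac{|I_W|}{2}\rfloor$. \end{enumerate}
   Context: A strong-weak labeling of the edges of a graph $G$ assigns each edge the label strong or weak; it satisfies the strong triadic closure if for any two strong edges $\{u,v\}$ and $\{v,w\}$ the edge $\{u,w\}$ exists in $G$. MaxSTC is the problem of finding a strong-weak labeling satisfying the strong triadic closure with the maximum number of strong edges. A split graph is a graph whose vertex set can be partitioned into a clique $C$ and an independent set $I$ (a split partition $(C,I)$). A vertex $u$ misses a vertex $v$ if $\{u,v\}\notin E(G)$. $E(C)$ denotes the set of edges with both endpoints in $C$. *)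

(* A simple graph on a finite vertex type T is a symmetric,
   irreflexive boolean relation g; edges are 2-element vertex sets. *)
From mathcomp Require Import all_boot.
Set Implicit Arguments. Unset Strict Implicit. Unset Printing Implicit Defensive.

Section Defs.
Variable T : finType.
Variable g : rel T.

Definition edges : {set {set T}} :=
  [set s : {set T} | [exists x, exists y, g x y && (s == [set x; y])]].

Definition edges_in (C : {set T}) : {set {set T}} :=
  [set s in edges | s \subset C].

(* A strong-weak labeling is given by its set S of strong edges (the other
   edges are weak). *)
Definition STC (S : {set {set T}}) : Prop :=
  S \subset edges /\
  forall u v w, u != w -> [set u; v] \in S -> [set v; w] \in S -> g u w.

Definition maxSTC_opt (S : {set {set T}}) : Prop :=
  STC S /\ forall S', STC S' -> #|S'| <= #|S|.

Definition is_clique (C : {set T}) : Prop :=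
  forall x y, x \in C -> y \in C -> x != y -> g x y.
Definition is_independent (I : {set T}) : Prop :=
  forall x y, x \in I -> y \in I -> ~~ g x y.

Definition split_partition (C I : {set T}) : Prop :=
  [disjoint C & I] /\ C :|: I = [set: T] /\ is_clique C /\ is_independent I.

Definition missed_in (u : T) (C : {set T}) : {set T} :=
  [set v in C | ~~ g u v].

Definition incident_in (I : {set T}) (S : {set {set T}}) : {set T} :=
  [set v in I | [exists s in S, v \in s]].

End Defs.

(* Encode a strong edge {v, a} with v in I and a in C as the pair (v, a).  As I
   is independent, the strong triadic closure gives each a in C at most one
   strong neighbour v in I, and it makes the clique edge {a, x} weak for every
   x in C missed by v.  A weak clique edge arises in this way from at most two
   pairs, one per endpoint, and every strong edge outside E(C) is such a pair;
   hence |E_S| + #weak E(C) <= |E(C)| + #pairs.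

   If every vertex of I_W misses at least three vertices of C, double counting
   gives 3 #pairs <= 2 #weak, and optimality against the labelling E(C) forces
   both counts to vanish.  If every vertex of I_W misses exactly one vertex of
   C, each pair yields exactly one weak edge; when (v, a) and (u, b) yield the
   same one, b is the vertex missed by v and a the one missed by u, so such
   pairs are determined by their I-endpoint and 2 #pairs <= 2 #weak + |I_W|. *)

From mathcomp Require Import all_boot zify.

Set Implicit Arguments.
Unset Strict Implicit.

Lemma card_setIdE (X : finType) (D : {set X}) (P : pred X) :
  #|[set x in D | P x]| = \sum_(x in D) P x.
Proof.
rewrite -sum1dep_card big_mkcondr /=.
by apply: eq_bigr => x _; case: (P x).
Qed.

Lemma sum_card_rel (aT bT : finType) (A : {set aT}) (B : {set bT})
    (R : aT -> bT -> bool) :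
  \sum_(a in A) #|[set b in B | R a b]| = \sum_(b in B) #|[set a in A | R a b]|.
Proof.
under eq_bigr do rewrite card_setIdE.
under [RHS]eq_bigr do rewrite card_setIdE.
exact: exchange_big.
Qed.

Section DoubleCounting.
Variables (aT bT : finType) (A : {set aT}) (B : {set bT}) (R : aT -> bT -> bool).

Local Notation nbhd a := [set b in B | R a b].
Local Notation fibre b := [set a in A | R a b].

Lemma double_counting_leq d e :
  (forall a, a \in A -> d <= #|nbhd a|) ->
  (forall b, b \in B -> #|fibre b| <= e) ->
  #|A| * d <= #|B| * e.
Proof.
move=> ge_d le_e; rewrite -!sum_nat_const.
apply: (@leq_trans (\sum_(a in A) #|nbhd a|)); first exact: leq_sum.
by rewrite sum_card_rel; apply: leq_sum.
Qed.

Definition shares_image a :=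
  [exists a' in A, (a' != a) && [exists b in B, R a b && R a' b]].

Lemma card_fibres_le2 :
  (forall a, a \in A -> #|nbhd a| = 1) ->
  (forall b, b \in B -> #|fibre b| <= 2) ->
  #|A|.*2 <= #|B|.*2 + #|[set a in A | shares_image a]|.
Proof.
set X := [set a in A | shares_image a] => nbhd1 fibre2.
have fibre_shared b : b \in B -> (#|fibre b|).*2 <= 2 + #|[set a in X | R a b]|.
  move=> bB; case: (leqP #|fibre b| 1) => [|fibre_gt1]; first lia.
  suff /subset_leq_card : fibre b \subset [set a in X | R a b].
    by have := fibre2 b bB; lia.
  apply/subsetP => a; rewrite !inE => /andP[aA Rab]; rewrite aA Rab /= andbT.
  have [a1 [a2 [a1F a2F a12]]] := card_gt1P fibre_gt1.
  have [a' a'F a'a] : exists2 a', a' \in fibre b & a' != a.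
    by case: (eqVneq a1 a) => [<-|]; [exists a2; rewrite // eq_sym | exists a1].
  move: a'F; rewrite inE => /andP[a'A Ra'b].
  apply/exists_inP; exists a'; rewrite // a'a.
  by apply/exists_inP; exists b; rewrite ?Rab.
have -> : #|A| = \sum_(b in B) #|fibre b|.
  by rewrite -sum_card_rel -sum1_card; apply: eq_bigr => a /nbhd1.
have -> : #|X| = \sum_(b in B) #|[set a in X | R a b]|.
  rewrite -sum_card_rel -sum1_card; apply: eq_bigr => a.
  by rewrite inE => /andP[/nbhd1].
rewrite -!mul2n big_distrr /=.
have -> : 2 * #|B| = \sum_(b in B) 2 by rewrite sum_nat_const mulnC.
rewrite -big_split /=; apply: leq_sum => b bB; rewrite mul2n; exact: fibre_shared.
Qed.

End DoubleCounting.

Lemma eq_set2 (T : finType) (x y x' y' : T) :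
  [set x; y] = [set x'; y'] -> (x = x' /\ y = y') \/ (x = y' /\ y = x').
Proof.
move=> E.
have : x \in [set x'; y'] by rewrite -E set21.
have : y \in [set x'; y'] by rewrite -E set22.
have : x' \in [set x; y] by rewrite E set21.
have : y' \in [set x; y] by rewrite E set22.
by move=> /set2P[] ? /set2P[] ? /set2P[] ? /set2P[] ?; subst; auto.
Qed.

Lemma edges_set2 (T : finType) (g : rel T) x y :
  symmetric g -> [set x; y] \in edges g -> g x y.
Proof.
move=> g_sym; rewrite inE => /existsP[x' /existsP[y' /andP[gxy /eqP E]]].
by case: (eq_set2 E) => -[-> ->] //; rewrite g_sym.
Qed.

Section SplitGraph.
Variables (T : finType) (g : rel T).
Hypothesis g_sym : symmetric g.
Variables C I : {set T}.
Hypothesis hsplit : split_partition g C I.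

Local Notation EC := (edges_in g C).
Local Notation missed v := (missed_in g v C).

Lemma split_notI x : x \in C -> x \notin I.
Proof. by case: hsplit => dis _ xC; rewrite (disjointFr dis xC). Qed.

Lemma split_notC x : x \notin C -> x \in I.
Proof.
case: hsplit => _ [cover _] xC.
have : x \in C :|: I by rewrite cover inE.
by rewrite inE (negbTE xC).
Qed.

Lemma STC_edges_in : STC g EC.
Proof.
case: hsplit => _ [_ [clique _]].
split; first by apply/subsetP => e; rewrite inE => /andP[].
move=> u v w uw; rewrite !inE => /andP[_ sub_uv] /andP[_ sub_vw].
apply: clique uw; first exact: subsetP sub_uv u (set21 u v).
exact: subsetP sub_vw w (set22 v w).
Qed.

Variable ES : {set {set T}}.
Hypothesis hES : STC g ES.

Local Notation weak_C := (EC :\: ES).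
Local Notation IW := (incident_in I ES).

Definition strong_IC : {set T * T} :=
  [set p | [&& p.1 \in I, p.2 \in C & [set p.1; p.2] \in ES]].

Definition hits (p : T * T) (w : {set T}) :=
  [exists x in missed p.1, w == [set p.2; x]].

Lemma strong_IC_adj p : p \in strong_IC -> g p.1 p.2.
Proof.
rewrite inE => /and3P[_ _ pES]; apply: edges_set2 g_sym _.
by case: hES => /subsetP sub _; exact: sub.
Qed.

Lemma strong_IC_snd_inj : {in strong_IC &, injective snd}.
Proof.
move=> [v a] [v' a'] /[!inE] /= /and3P[vI _ va] /and3P[v'I _ v'a] /= aa'; subst a'.
case: (eqVneq v v') => [-> // | vv']; case: hES hsplit => _ stc [_ [_ [_ indep]]].
by have := stc v a v' vv' va; rewrite setUC (negbTE (indep v v' vI v'I)) => /(_ v'a).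
Qed.

Lemma strong_IC_incident p : p \in strong_IC -> p.1 \in IW.
Proof.
rewrite !inE => /and3P[vI _ pES]; rewrite vI.
by apply/exists_inP; exists [set p.1; p.2]; rewrite ?set21.
Qed.

Lemma weak_of_missed p x :
  p \in strong_IC -> x \in missed p.1 -> [set p.2; x] \in weak_C.
Proof.
move=> pS; have gva := strong_IC_adj pS; rewrite inE => /andP[xC vx].
move: pS; rewrite inE => /and3P[vI aC vaES].
have vx' : p.1 != x by apply: contraTneq vI => ->; exact: split_notI.
have ax : p.2 != x by apply: contraNneq vx => <-.
case: hES hsplit => _ stc [_ [_ [clique _]]].
rewrite !inE; apply/and3P; split.
- by apply: contra vx => axES; exact: stc vaES axES.
- by apply/existsP; exists p.2; apply/existsP; exists x; rewrite clique ?eqxx.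
- by apply/subsetP => y /set2P[] ->.
Qed.

Lemma hits_imset p : p \in strong_IC ->
  [set w in weak_C | hits p w] = [set [set p.2; x] | x in missed p.1].
Proof.
move=> pS; apply/setP => w; rewrite inE; apply/andP/imsetP.
  by case=> _ /exists_inP[x xM /eqP ->]; exists x.
by case=> x xM ->; split; [exact: weak_of_missed | apply/exists_inP; exists x].
Qed.

Lemma card_hits p : p \in strong_IC ->
  #|[set w in weak_C | hits p w]| = #|missed p.1|.
Proof.
move=> pS; rewrite hits_imset // card_in_imset // => x y.
rewrite !inE => /andP[_ vx] _ /eq_set2[[_ ->] // | [_ xa]].
by rewrite xa strong_IC_adj in vx.
Qed.

Lemma card_hitters_le2 w : w \in weak_C -> #|[set p in strong_IC | hits p w]| <= 2.
Proof.
rewrite !inE => /andP[_ /andP[/existsP[y /existsP[z /andP[_ /eqP w_yz]]] _]].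
have snd_inj : {in [set p in strong_IC | hits p w] &, injective snd}.
  by move=> p q /setIdP[pS _] /setIdP[qS _]; exact: strong_IC_snd_inj.
rewrite -(card_in_imset snd_inj); apply: leq_trans (_ : #|w| <= 2).
  apply/subset_leq_card/subsetP => _ /imsetP[p /setIdP[_ /exists_inP[x _ /eqP ->]] ->].
  exact: set21.
by rewrite w_yz cards2; case: (y != z).
Qed.

Lemma strong_notin_C e : e \in ES :\: EC -> e \in [set [set p.1; p.2] | p in strong_IC].
Proof.
rewrite inE => /andP[eNEC eES].
case: hES hsplit => /subsetP sub _ [_ [_ [_ indep]]].
have := sub e eES; rewrite inE => /existsP[x /existsP[y /andP[gxy /eqP exy]]].
subst e; have NsubC : ~~ ([set x; y] \subset C).
  by apply: contra eNEC => subC; rewrite inE subC andbT sub.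
have [xC | xNC] := boolP (x \in C).
  have yNC : y \notin C by apply: contra NsubC => yC; apply/subsetP => z /set2P[] ->.
  apply/imsetP; exists (y, x); last by rewrite setUC.
  by rewrite inE /= split_notC // xC setUC eES.
have yC : y \in C.
  by apply: contraLR gxy => /split_notC yI; rewrite indep // split_notC.
by apply/imsetP; exists (x, y); rewrite // inE /= split_notC // yC eES.
Qed.

Lemma card_strong_weak : #|ES| + #|weak_C| <= #|EC| + #|strong_IC|.
Proof.
have : #|ES :\: EC| <= #|strong_IC|.
  apply: leq_trans (leq_imset_card (fun p : T * T => [set p.1; p.2]) _).
  by apply/subset_leq_card/subsetP => e; exact: strong_notin_C.
have := cardsID EC ES; have := cardsID ES EC; rewrite setIC; lia.
Qed.

Local Notation shared := (shares_image strong_IC weak_C hits).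

Lemma shared_partner p : p \in strong_IC -> shared p ->
  exists2 q, q \in strong_IC & (q.2 \in missed p.1) && (p.2 \in missed q.1).
Proof.
move=> pS /exists_inP[q qS /andP[qp /exists_inP[w _ /andP[]]]].
move=> /exists_inP[x xM /eqP ->] /exists_inP[y yM /eqP /eq_set2[[pq _] | [py xq]]].
  by rewrite (strong_IC_snd_inj pS qS pq) eqxx in qp.
by exists q; rewrite // -xq py xM yM.
Qed.

Lemma shared_fst_inj : (forall v, v \in IW -> #|missed v| <= 1) ->
  {in [set p in strong_IC | shared p] &, injective fst}.
Proof.
move=> missed_le1 p p' /setIdP[pS shp] /setIdP[p'S shp'] pp'.
have [q qS /andP[qM pM]] := shared_partner pS shp.
have [q' q'S /andP[q'M p'M]] := shared_partner p'S shp'.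
have qq' : q = q'.
  apply: strong_IC_snd_inj => //; rewrite pp' in qM.
  exact: (card_le1_eqP (missed_le1 _ (strong_IC_incident p'S)) _ _ q'M qM).
subst q'; apply: strong_IC_snd_inj => //.
exact: (card_le1_eqP (missed_le1 _ (strong_IC_incident qS)) _ _ p'M pM).
Qed.

Lemma strong_eq_edges_in : #|EC| <= #|ES| ->
  (forall v, v \in IW -> 3 <= #|missed v|) -> ES = EC.
Proof.
move=> EC_le_ES missed_ge3.
have : #|strong_IC| * 3 <= #|weak_C| * 2.
  apply: (double_counting_leq (R := hits)) => [p pS | w /card_hitters_le2 //].
  by rewrite card_hits // missed_ge3 // strong_IC_incident.
have := card_strong_weak => count_ES count_weak.
have /eqP : #|weak_C| = 0 by lia.
rewrite cards_eq0 setD_eq0 => EC_sub_ES.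
by apply/eqP; rewrite eq_sym eqEcard EC_sub_ES; lia.
Qed.

Lemma card_strong_le : (forall v, v \in IW -> #|missed v| = 1) ->
  #|ES| <= #|EC| + #|IW| %/ 2.
Proof.
move=> missed1.
have shared_le_IW : #|[set p in strong_IC | shared p]| <= #|IW|.
  rewrite -(card_in_imset (shared_fst_inj _)) => [|v /missed1 -> //].
  apply/subset_leq_card/subsetP => _ /imsetP[p /setIdP[pS _] ->].
  exact: strong_IC_incident.
have : #|strong_IC|.*2 <= #|weak_C|.*2 + #|[set p in strong_IC | shared p]|.
  apply: card_fibres_le2 card_hitters_le2 => p pS.
  by rewrite card_hits // missed1 // strong_IC_incident.
have := card_strong_weak; lia.
Qed.

End SplitGraph.

Unset Implicit Arguments.

Theorem lemma2 (T : finType) (g : rel T)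
  (g_sym : symmetric g) (g_irr : irreflexive g)
  (C I : {set T}) (hsplit : split_partition g C I)
  (ES : {set {set T}}) (hopt : maxSTC_opt g ES) :
  ((forall v, v \in incident_in I ES -> 3 <= #|missed_in g v C|) ->
     ES = edges_in g C) /\
  ((forall v, v \in incident_in I ES -> #|missed_in g v C| = 1) ->
     #|ES| <= #|edges_in g C| + #|incident_in I ES| %/ 2).
Proof.
case: hopt => hSTC hmax; split.
  by apply: strong_eq_edges_in => //; exact: hmax (STC_edges_in hsplit).
exact: card_strong_le.
Qed.
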